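(* For real $p\neq 0$, the inequality $\left( \frac{\tanh x}{x}\right) ^{p}<\frac{2}{3}\left( \frac{x}{\sinh x}\right) ^{3p}+\frac{1}{3}$ holds for all $x\in(0,\infty)$ if and only if $p<0$ or $p\geq 12/5$. *)

From Stdlib Require Export Reals.

From Stdlib Require Import Reals Lra Lia ZArith List.
From Coquelicot Require Import Coquelicot.
Import ListNotations.
Open Scope R_scope.

(* With [w = x coth x - 1] and [z = (sinh x / x)^3 - 1] the inequality reads
   [(1 + w)^(-p) < 2/3 (1 + z)^(-p) + 1/3].

   For [p < 0], Lazarevic's inequality [(sinh x / x)^3 >= cosh x] gives
   [tanh x / x >= (x / sinh x)^2], so with [A = (x / sinh x)^p > 1] it suffices that
   [2 A^3 - 3 A^2 + 1 = (A - 1)^2 (2 A + 1) > 0].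

   For [p >= 12/5], convexity of [t ^ (5p/12)] reduces the claim to [p = 12/5].  There the
   left side is below [(5/8)^(12/5) < 1/3] when [x > 8/5]; for [x <= 8/5], Taylor polynomials
   of [exp] squeeze [tanh x / x <= h(x^2)^5] and [k(x^2)^5 <= (x / sinh x)^3] for explicit
   polynomials with [3 h^12 < 2 k^12 + 1].

   For [0 <= p < 12/5] the inequality fails at [x^2 = (12 - 5p)/50]: the binomial series to
   third order for [(1 + w)^(-p)] and to second order for [(1 + z)^(-p)] leave a polynomial
   inequality in [x], [w] and [z], and Taylor bounds on [w] and [z] make it one in [x].

   Each polynomial inequality on an interval is certified in exact integer arithmetic: on every
   piece of a subdivision, mapped affinely onto [[0, 1]], a lower bound computed from the
   coefficients is positive. *)

(** * Integer polynomials and certified positivity *)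

Definition peval (p : list Z) (x : R) : R :=
  fold_right (fun c acc => IZR c + x * acc) 0 p.

Fixpoint padd (p q : list Z) : list Z :=
  match p, q with
  | nil, _ => q
  | _, nil => p
  | a :: p', b :: q' => (a + b)%Z :: padd p' q'
  end.

Definition pscale (c : Z) (p : list Z) : list Z := map (Z.mul c) p.

Definition psub (p q : list Z) : list Z := padd p (pscale (-1) q).

Fixpoint pmul (p q : list Z) : list Z :=
  match p with
  | nil => nil
  | a :: p' => padd (pscale a q) (0%Z :: pmul p' q)
  end.

Fixpoint ppow (p : list Z) (n : nat) : list Z :=
  match n with O => [1%Z] | S m => pmul p (ppow p m) end.

Definition pX : list Z := [0; 1]%Z.

Fixpoint pcomp_sqr (p : list Z) : list Z :=
  match p with nil => nil | c :: p' => c :: 0%Z :: pcomp_sqr p' end.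

Fixpoint pshift (a : Z) (p : list Z) : list Z :=
  match p with
  | nil => nil
  | c :: p' => let r := pshift a p' in padd [c] (padd (pscale a r) (0%Z :: r))
  end.

Fixpoint pstretch (w : Z) (p : list Z) : list Z :=
  match p with nil => nil | c :: p' => c :: pscale w (pstretch w p') end.

Fixpoint prescale (k : Z) (p : list Z) : list Z :=
  match p with
  | nil => nil
  | c :: p' => (c * k ^ Z.of_nat (length p'))%Z :: prescale k p'
  end.

Fixpoint plower01 (p : list Z) : Z :=
  match p with nil => 0%Z | c :: p' => (c + Z.min 0 (plower01 p'))%Z end.

Fixpoint pdivX (p : list Z) : list Z :=
  match p with 0%Z :: p' => pdivX p' | _ => p end.

Lemma peval_cons c p x : peval (c :: p) x = IZR c + x * peval p x.
Proof. reflexivity. Qed.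

Lemma peval_add p q x : peval (padd p q) x = peval p x + peval q x.
Proof.
  revert q; induction p as [|a p IH]; intros [|b q]; cbn [padd];
    rewrite ?peval_cons; cbn [peval fold_right]; try ring.
  fold (peval p x) (peval q x) (peval (padd p q) x).
  rewrite plus_IZR, IH. ring.
Qed.

Lemma peval_scale c p x : peval (pscale c p) x = IZR c * peval p x.
Proof.
  unfold pscale; induction p as [|a p IH]; [cbn; ring|].
  cbn [map]. rewrite !peval_cons, mult_IZR, IH. ring.
Qed.

Lemma peval_sub p q x : peval (psub p q) x = peval p x - peval q x.
Proof. unfold psub. rewrite peval_add, peval_scale. ring. Qed.

Lemma peval_mul p q x : peval (pmul p q) x = peval p x * peval q x.
Proof.
  induction p as [|a p IH]; [cbn; ring|].
  cbn [pmul]. rewrite peval_add, peval_scale, !peval_cons, IH. ring.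
Qed.

Lemma peval_pow p n x : peval (ppow p n) x = peval p x ^ n.
Proof.
  induction n as [|n IH]; cbn [ppow pow]; [cbn; ring|].
  rewrite peval_mul, IH. ring.
Qed.

Lemma peval_X x : peval pX x = x.
Proof. cbn. ring. Qed.

Lemma peval_const c x : peval [c] x = IZR c.
Proof. cbn. ring. Qed.

Lemma peval_comp_sqr p x : peval (pcomp_sqr p) x = peval p (x * x).
Proof.
  induction p as [|c p IH]; [reflexivity|].
  cbn [pcomp_sqr]. rewrite !peval_cons, IH. ring.
Qed.

Lemma peval_shift a p t : peval (pshift a p) t = peval p (IZR a + t).
Proof.
  induction p as [|c p IH]; [reflexivity|].
  cbn [pshift]. rewrite !peval_add, peval_scale, !peval_cons, IH.
  change (peval [] t) with 0. ring.
Qed.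

Lemma peval_stretch w p t : peval (pstretch w p) t = peval p (IZR w * t).
Proof.
  induction p as [|c p IH]; [reflexivity|].
  cbn [pstretch]. rewrite !peval_cons, peval_scale, IH. ring.
Qed.

(* [prescale k p] is [k ^ deg p * p (y / k)], which still has integer coefficients. *)
Lemma peval_rescale k p z :
  IZR k * peval (prescale k p) (IZR k * z) = IZR k ^ length p * peval p z.
Proof.
  induction p as [|c p IH]; [cbn; ring|].
  cbn [prescale length]. rewrite !peval_cons, mult_IZR, <- pow_IZR.
  transitivity (IZR c * IZR k ^ S (length p)
                + IZR k * z * (IZR k * peval (prescale k p) (IZR k * z)));
    [cbn [pow]; ring|].
  rewrite IH. cbn [pow]. ring.
Qed.

Lemma plower01_le p t : 0 <= t <= 1 -> IZR (plower01 p) <= peval p t.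
Proof.
  intros Ht. induction p as [|c p IH]; [cbn; lra|].
  cbn [plower01]. rewrite peval_cons, plus_IZR.
  destruct (Z.min_spec 0 (plower01 p)) as [[Hlt ->]|[Hge ->]].
  - apply IZR_lt in Hlt. nra.
  - apply IZR_le in Hge. nra.
Qed.

Lemma peval_divX_pos p x : 0 < x -> 0 < peval (pdivX p) x -> 0 < peval p x.
Proof.
  intros Hx. induction p as [|c p IH]; [cbn; lra|].
  destruct c; cbn [pdivX]; auto.
  intros H. rewrite peval_cons. specialize (IH H). nra.
Qed.

(* [pos_on_pieces p k a [b1; ...; bn]] certifies [p > 0] on each interval
   [b_i / k, b_(i+1) / k] (with b_0 = a), by mapping it affinely onto [0, 1]. *)
Fixpoint pos_on_pieces (p : list Z) (k a : Z) (bs : list Z) : bool :=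
  match bs with
  | nil => true
  | b :: bs' =>
      (a <? b)%Z && (0 <? plower01 (pstretch (b - a) (pshift a (prescale k p))))%Z
      && pos_on_pieces p k b bs'
  end.

Lemma pos_on_piece p k a b : (0 < k)%Z -> (a < b)%Z ->
  (0 < plower01 (pstretch (b - a) (pshift a (prescale k p))))%Z ->
  forall x, IZR a / IZR k <= x <= IZR b / IZR k -> 0 < peval p x.
Proof.
  intros Hk Hab Hlow x [Hax Hxb].
  apply IZR_lt in Hk, Hlow. apply Z.lt_0_sub, IZR_lt in Hab. rewrite minus_IZR in Hab.
  apply Rmult_le_compat_r with (r := IZR k) in Hax, Hxb; try lra.
  unfold Rdiv in Hax, Hxb. rewrite Rmult_assoc, Rinv_l, Rmult_1_r in Hax, Hxb by lra.
  set (t := (IZR k * x - IZR a) / (IZR b - IZR a)).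
  assert (Ht : 0 <= t <= 1).
  { unfold t; split.
    - apply Rdiv_le_0_compat; lra.
    - apply Rmult_le_reg_r with (IZR b - IZR a); [lra|].
      unfold Rdiv. rewrite Rmult_assoc, Rinv_l by lra. lra. }
  pose proof (plower01_le (pstretch (b - a) (pshift a (prescale k p))) t Ht) as Hpt.
  rewrite peval_stretch, peval_shift, minus_IZR in Hpt.
  replace (IZR a + (IZR b - IZR a) * t) with (IZR k * x) in Hpt by (unfold t; field; lra).
  pose proof (peval_rescale k p x) as Hres.
  assert (0 < IZR k ^ length p) by (apply pow_lt; lra).
  nra.
Qed.

Lemma last_cons_cons {A : Type} (b a : A) (l : list A) : last (b :: l) a = last l b.
Proof.
  revert a b; induction l as [|c l IH]; intros a b; [reflexivity|].
  change (last (c :: l) a = last (c :: l) b). rewrite (IH a c), (IH b c). reflexivity.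
Qed.

Lemma pos_on_pieces_sound p k a bs : (0 < k)%Z -> pos_on_pieces p k a bs = true ->
  forall x, IZR a / IZR k < x <= IZR (last bs a) / IZR k -> 0 < peval p x.
Proof.
  intros Hk. revert a; induction bs as [|b bs IH]; intros a Hcert x Hx; [cbn in Hx; lra|].
  cbn [pos_on_pieces] in Hcert.
  apply andb_prop in Hcert as [Hcert Hrest]. apply andb_prop in Hcert as [Hab Hlow].
  apply Z.ltb_lt in Hab, Hlow. rewrite last_cons_cons in Hx.
  destruct (Rle_or_lt x (IZR b / IZR k)).
  - apply (pos_on_piece p k a b Hk Hab Hlow); lra.
  - apply (IH b); [exact Hrest| lra].
Qed.

Definition certified_pos (p : list Z) (k : Z) (bs : list Z) : bool :=
  (0 <? k)%Z && pos_on_pieces (pdivX p) k 0 bs.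

Lemma certified_pos_sound p k bs : certified_pos p k bs = true ->
  forall x, 0 < x <= IZR (last bs 0%Z) / IZR k -> 0 < peval p x.
Proof.
  intros Hcert x Hx. apply andb_prop in Hcert as [Hk Hcert]. apply Z.ltb_lt in Hk.
  apply peval_divX_pos; [lra|].
  apply (pos_on_pieces_sound _ k 0%Z bs Hk Hcert). unfold Rdiv. rewrite Rmult_0_l. exact Hx.
Qed.

Lemma nondecreasing_of_derive (f df : R -> R) (a b : R) : a <= b ->
  (forall x, a <= x <= b -> is_derive f x (df x)) ->
  (forall x, a <= x <= b -> 0 <= df x) -> f a <= f b.
Proof.
  intros Hab Hd Hpos.
  destruct (MVT_gen f a b df) as [c [Hc Heq]];
    rewrite ?Rmin_left, ?Rmax_right in * by lra.
  - intros x Hx. apply Hd. lra.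
  - intros x Hx. apply continuity_pt_filterlim, (ex_derive_continuous f).
    eexists. apply Hd. exact Hx.
  - pose proof (Hpos c ltac:(lra)). nra.
Qed.

Lemma le_of_derive_le (f g df dg : R -> R) (a b : R) : a <= b ->
  (forall x, a <= x <= b -> is_derive f x (df x)) ->
  (forall x, a <= x <= b -> is_derive g x (dg x)) ->
  (forall x, a <= x <= b -> df x <= dg x) -> f a <= g a -> f b <= g b.
Proof.
  intros Hab Hf Hg Hle Ha.
  enough (g a - f a <= g b - f b) by lra.
  apply (nondecreasing_of_derive (fun x => g x - f x) (fun x => dg x - df x) a b Hab).
  - intros x Hx. apply (is_derive_minus g f); auto.
  - intros x Hx. specialize (Hle x Hx). lra.
Qed.

Lemma is_derive_Rmult (f g : R -> R) x df dg : is_derive f x df -> is_derive g x dg ->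
  is_derive (fun y => f y * g y) x (df * g x + f x * dg).
Proof. intros Hf Hg. apply (is_derive_mult f g); auto. intros; apply Rmult_comm. Qed.

Lemma is_derive_Rpower_l r t : 0 < t ->
  is_derive (fun t => Rpower t r) t (r * Rpower t (r - 1)).
Proof. intros Ht. apply is_derive_Reals, derivable_pt_lim_power, Ht. Qed.

Lemma is_derive_Rpower_comp (f : R -> R) r x df : 0 < f x -> is_derive f x df ->
  is_derive (fun y => Rpower (f y) r) x (df * (r * Rpower (f x) (r - 1))).
Proof.
  intros Hf Hd. exact (is_derive_comp (fun t => Rpower t r) f x _ _ (is_derive_Rpower_l r _ Hf) Hd).
Qed.

Lemma Rpower_1_l y : Rpower 1 y = 1.
Proof. unfold Rpower. rewrite ln_1, Rmult_0_r. apply exp_0. Qed.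

Lemma Rpower_pos a r : 0 < Rpower a r.
Proof. apply exp_pos. Qed.

Lemma Rpower_inv_l a r : 0 < a -> Rpower (/ a) r = / Rpower a r.
Proof.
  intros Ha. rewrite <- Rpower_Ropp. unfold Rpower. rewrite ln_Rinv by exact Ha. f_equal; ring.
Qed.

Lemma Rpower_mult_nat a r (n : nat) : Rpower a (INR n * r) = Rpower a r ^ n.
Proof. rewrite <- Rpower_pow by apply Rpower_pos. rewrite Rpower_mult. f_equal. ring. Qed.

Lemma Rpower_le_1 a r : 1 <= a -> r <= 0 -> Rpower a r <= 1.
Proof. intros Ha Hr. rewrite <- (Rpower_O a) by lra. apply Rle_Rpower; lra. Qed.

Lemma Rpower_ge_1 a r : 1 <= a -> 0 <= r -> 1 <= Rpower a r.
Proof. intros Ha Hr. rewrite <- (Rpower_O a) by lra. apply Rle_Rpower; lra. Qed.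

Lemma Rpower_le_base_nonpos a b r : r <= 0 -> 0 < a <= b -> Rpower b r <= Rpower a r.
Proof.
  intros Hr Hab. rewrite <- (Ropp_involutive r), !(Rpower_Ropp _ (- r)).
  apply Rinv_le_contravar; [apply Rpower_pos|]. apply Rle_Rpower_l; lra.
Qed.

Lemma Rpower_pow_l c n r : 0 < c -> Rpower (c ^ n) r = Rpower c (INR n * r).
Proof. intros Hc. rewrite <- Rpower_pow, Rpower_mult by exact Hc. reflexivity. Qed.

Lemma Rpower_gt_1 c p : 0 < c < 1 -> p < 0 -> 1 < Rpower c p.
Proof.
  intros Hc Hp. rewrite <- (Ropp_involutive p), Rpower_Ropp.
  pose proof (Rlt_Rpower_l c 1 (- p) ltac:(lra) Hc) as H. rewrite Rpower_1_l in H.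
  rewrite <- Rinv_1. apply Rinv_lt_contravar; [|exact H].
  apply Rmult_lt_0_compat; [apply Rpower_pos| lra].
Qed.

Lemma Rdiv_le_cross a b c d : 0 < b -> 0 < d -> a * d <= c * b -> a / b <= c / d.
Proof.
  intros Hb Hd H. apply Rmult_le_reg_r with (b * d); [nra|].
  replace (a / b * (b * d)) with (a * d) by (field; lra).
  replace (c / d * (b * d)) with (c * b) by (field; lra). exact H.
Qed.

Lemma exp_mul_exp_opp x : exp x * exp (- x) = 1.
Proof. rewrite <- exp_plus, Rplus_opp_r. apply exp_0. Qed.

(** * Taylor and convexity bounds *)

Fixpoint inv_fact (n : nat) : R :=
  match n with O => 1 | S m => inv_fact m / INR (S m) end.

Fixpoint exp_taylor (n : nat) (x : R) : R :=
  match n with O => 1 | S m => exp_taylor m x + inv_fact (S m) * x ^ S m end.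

Lemma exp_taylor_0 n : exp_taylor n 0 = 1.
Proof.
  induction n as [|n IH]; cbn [exp_taylor]; [reflexivity|]. rewrite IH, pow_i by lia. ring.
Qed.

Lemma is_derive_exp_taylor n x : is_derive (exp_taylor (S n)) x (exp_taylor n x).
Proof.
  induction n as [|n IH]; [cbn; auto_derive; auto; simpl; field|].
  change (exp_taylor (S (S n)))
    with (fun y => exp_taylor (S n) y + inv_fact (S (S n)) * y ^ S (S n)).
  change (exp_taylor (S n) x) with (exp_taylor n x + inv_fact (S n) * x ^ S n).
  apply (is_derive_plus (exp_taylor (S n))); [exact IH|].
  auto_derive; auto.
  change (match n with 0%nat => 1 | S _ => INR n + 1 end) with (INR (S n)).
  pose proof (lt_0_INR (S n) ltac:(lia)). cbn [inv_fact pow]. field. lra.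
Qed.

Lemma exp_taylor_le_exp n x : 0 <= x -> exp_taylor n x <= exp x.
Proof.
  revert x; induction n as [|n IH]; intros x Hx.
  - cbn. pose proof (exp_ineq1_le x). lra.
  - apply (le_of_derive_le (exp_taylor (S n)) exp (exp_taylor n) exp 0 x Hx).
    + intros y _. apply is_derive_exp_taylor.
    + intros y _. apply is_derive_exp.
    + intros y Hy. apply IH. lra.
    + rewrite exp_taylor_0, exp_0. lra.
Qed.

Lemma exp_opp_taylor_alternating n x : 0 <= x ->
  (Nat.even n = true -> exp (- x) <= exp_taylor n (- x)) /\
  (Nat.even n = false -> exp_taylor n (- x) <= exp (- x)).
Proof.
  revert x; induction n as [|n IH]; intros x Hx.
  - split; [|discriminate]. intros _. cbn.
    pose proof (exp_ineq1_le x). pose proof (exp_pos (- x)). pose proof (exp_mul_exp_opp x).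
    nra.
  - assert (Hexp : forall y, is_derive (fun t => - exp (- t)) y (exp (- y))).
    { intros y. auto_derive; auto. ring. }
    assert (Htay : forall y, is_derive (fun t => - exp_taylor (S n) (- t)) y (exp_taylor n (- y))).
    { intros y. rewrite <- (Ropp_involutive (exp_taylor n (- y))).
      apply (is_derive_opp (fun t => exp_taylor (S n) (- t))).
      replace (- exp_taylor n (- y)) with (scal (-1) (exp_taylor n (- y)))
        by (unfold scal; simpl; unfold mult; simpl; ring).
      apply (is_derive_comp (exp_taylor (S n)) Ropp); [apply is_derive_exp_taylor|].
      auto_derive; auto. }
    assert (Hat0 : - exp (- 0) = - exp_taylor (S n) (- 0))
      by (rewrite Ropp_0, exp_0, exp_taylor_0; reflexivity).
    rewrite Nat.even_succ, <- Nat.negb_even.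
    destruct (Nat.even n) eqn:Hn; cbn [negb]; split; intros H; try discriminate H.
    + enough (- exp (- x) <= - exp_taylor (S n) (- x)) by lra.
      apply (le_of_derive_le _ _ _ _ 0 x Hx (fun y _ => Hexp y) (fun y _ => Htay y)); [|lra].
      intros y Hy. apply (proj1 (IH y ltac:(lra))). reflexivity.
    + enough (- exp_taylor (S n) (- x) <= - exp (- x)) by lra.
      apply (le_of_derive_le _ _ _ _ 0 x Hx (fun y _ => Htay y) (fun y _ => Hexp y)); [|lra].
      intros y Hy. apply (proj2 (IH y ltac:(lra))). reflexivity.
Qed.

Lemma inv_fact_pos n : 0 < inv_fact n.
Proof.
  induction n as [|n IH]; cbn [inv_fact]; [lra|].
  apply Rdiv_lt_0_compat; [exact IH| apply lt_0_INR; lia].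
Qed.

Lemma exp_taylor_gt_1 n x : 0 < x -> 1 < exp_taylor (S n) x.
Proof.
  intros Hx. induction n as [|n IH].
  - change (1 < 1 + inv_fact 1 * x ^ 1). pose proof (inv_fact_pos 1). nra.
  - change (1 < exp_taylor (S n) x + inv_fact (S (S n)) * x ^ S (S n)).
    pose proof (inv_fact_pos (S (S n))). pose proof (pow_lt x (S (S n)) Hx). nra.
Qed.

Lemma is_derive_Rpower_1plus r w : -1 < w ->
  is_derive (fun w => Rpower (1 + w) r) w (r * Rpower (1 + w) (r - 1)).
Proof.
  intros Hw. rewrite <- (Rmult_1_l (r * _)).
  apply (is_derive_Rpower_comp (fun w => 1 + w)); [lra|]. auto_derive; auto.
Qed.

Lemma Rpower_1plus_opp_ge_taylor1 q w : 0 <= q -> 0 <= w -> 1 - q * w <= Rpower (1 + w) (- q).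
Proof.
  intros Hq Hw.
  apply (le_of_derive_le (fun w => 1 - q * w) (fun w => Rpower (1 + w) (- q))
           (fun _ => - q) (fun w => - q * Rpower (1 + w) (- q - 1)) 0 w Hw).
  - intros y _. auto_derive; auto. ring.
  - intros y Hy. apply is_derive_Rpower_1plus. lra.
  - intros y Hy. pose proof (Rpower_le_1 (1 + y) (- q - 1) ltac:(lra) ltac:(lra)). nra.
  - rewrite Rplus_0_r, Rpower_1_l. lra.
Qed.

Lemma Rpower_1plus_opp_le_taylor2 q w : 0 <= q -> 0 <= w ->
  Rpower (1 + w) (- q) <= 1 - q * w + q * (q + 1) / 2 * w ^ 2.
Proof.
  intros Hq Hw.
  apply (le_of_derive_le (fun w => Rpower (1 + w) (- q))
           (fun w => 1 - q * w + q * (q + 1) / 2 * w ^ 2)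
           (fun w => - q * Rpower (1 + w) (- q - 1)) (fun w => - q + q * (q + 1) * w) 0 w Hw).
  - intros y Hy. apply is_derive_Rpower_1plus. lra.
  - intros y _. auto_derive; auto. field.
  - intros y Hy. replace (- q - 1) with (- (q + 1)) by ring.
    pose proof (Rpower_1plus_opp_ge_taylor1 (q + 1) y ltac:(lra) ltac:(lra)). nra.
  - rewrite Rplus_0_r, Rpower_1_l. lra.
Qed.

Lemma Rpower_1plus_opp_ge_taylor3 q w : 0 <= q -> 0 <= w ->
  1 - q * w + q * (q + 1) / 2 * w ^ 2 - q * (q + 1) * (q + 2) / 6 * w ^ 3 <= Rpower (1 + w) (- q).
Proof.
  intros Hq Hw.
  apply (le_of_derive_le
           (fun w => 1 - q * w + q * (q + 1) / 2 * w ^ 2 - q * (q + 1) * (q + 2) / 6 * w ^ 3)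
           (fun w => Rpower (1 + w) (- q))
           (fun w => - q + q * (q + 1) * w - q * (q + 1) * (q + 2) / 2 * w ^ 2)
           (fun w => - q * Rpower (1 + w) (- q - 1)) 0 w Hw).
  - intros y _. auto_derive; auto. field.
  - intros y Hy. apply is_derive_Rpower_1plus. lra.
  - intros y Hy. replace (- q - 1) with (- (q + 1)) by ring.
    pose proof (Rpower_1plus_opp_le_taylor2 (q + 1) y ltac:(lra) ltac:(lra)).
    replace (q + 1 + 1) with (q + 2) in * by ring. nra.
  - rewrite Rplus_0_r, Rpower_1_l. lra.
Qed.

Lemma Rpower_ge_tangent1 r t : 1 <= r -> 0 < t -> 1 + r * (t - 1) <= Rpower t r.
Proof.
  intros Hr Ht.
  assert (Hd : forall y, 0 < y ->
            is_derive (fun t => Rpower t r - r * t) y (r * Rpower y (r - 1) - r)).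
  { intros y Hy. apply (is_derive_minus (fun t => Rpower t r)); [apply is_derive_Rpower_l, Hy|].
    auto_derive; auto. ring. }
  enough (Rpower 1 r - r * 1 <= Rpower t r - r * t) by (rewrite Rpower_1_l in *; lra).
  destruct (Rle_or_lt 1 t) as [H1|H1].
  - apply (nondecreasing_of_derive (fun t => Rpower t r - r * t)
             (fun y => r * Rpower y (r - 1) - r) 1 t H1);
      [intros y Hy; apply Hd; lra|].
    intros y Hy. pose proof (Rpower_ge_1 y (r - 1) ltac:(lra) ltac:(lra)). nra.
  - apply Ropp_le_cancel.
    apply (nondecreasing_of_derive (fun t => - (Rpower t r - r * t))
             (fun y => - (r * Rpower y (r - 1) - r)) t 1 ltac:(lra)).
    + intros y Hy. apply (is_derive_opp (fun t => Rpower t r - r * t)), Hd. lra.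
    + intros y Hy.
      pose proof (Rle_Rpower_l y 1 (r - 1) ltac:(lra) ltac:(lra)) as Hy1.
      rewrite Rpower_1_l in Hy1. nra.
Qed.

(* Both [s] and [1] lie above the tangent line of [t ^ r] at their mean [m]. *)
Lemma Rpower_convex_comb1 r l s : 1 <= r -> 0 <= l <= 1 -> 0 < s ->
  Rpower (l * s + (1 - l)) r <= l * Rpower s r + (1 - l).
Proof.
  intros Hr Hl Hs.
  set (m := l * s + (1 - l)).
  assert (Hm : 0 < m) by (unfold m; destruct (Req_dec l 1); subst; nra).
  set (M := Rpower m r). assert (HM : 0 < M) by apply Rpower_pos.
  pose proof (Rpower_ge_tangent1 r (s / m) Hr ltac:(apply Rdiv_lt_0_compat; auto)) as Hs'.
  pose proof (Rpower_ge_tangent1 r (/ m) Hr ltac:(apply Rinv_0_lt_compat; auto)) as H1'.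
  unfold Rdiv in Hs'.
  rewrite <- Rpower_mult_distr, Rpower_inv_l in Hs' by (auto; apply Rinv_0_lt_compat; auto).
  rewrite Rpower_inv_l in H1' by auto. fold M in Hs', H1'.
  set (A := Rpower s r) in *.
  assert (Es : A >= M * (1 + r * (s * / m - 1))).
  { apply Rmult_le_compat_l with (r := M) in Hs'; [|lra].
    replace (M * (A * / M)) with A in Hs' by (field; lra). lra. }
  assert (E1 : 1 >= M * (1 + r * (/ m - 1))).
  { apply Rmult_le_compat_l with (r := M) in H1'; [|lra].
    replace (M * / M) with 1 in H1' by (field; lra). lra. }
  assert (Emean : l * (M * (1 + r * (s * / m - 1))) + (1 - l) * (M * (1 + r * (/ m - 1))) = M).
  { transitivity (M * (1 + r * ((l * s + (1 - l)) * / m) - r)); [ring|].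
    fold m. rewrite Rinv_r by lra. ring. }
  nra.
Qed.

Lemma Rpower_lt_convex_comb1 A B l r : 0 < A -> 0 < B -> 0 <= l <= 1 -> 1 <= r ->
  A < l * B + (1 - l) -> Rpower A r < l * Rpower B r + (1 - l).
Proof.
  intros HA HB Hl Hr HAB.
  apply Rlt_le_trans with (Rpower (l * B + (1 - l)) r).
  - apply Rlt_Rpower_l; lra.
  - apply Rpower_convex_comb1; assumption.
Qed.

(** * Hyperbolic functions *)

Lemma sinh_exp x : sinh x = (exp x - / exp x) / 2.
Proof. unfold sinh. rewrite exp_Ropp. reflexivity. Qed.

Lemma cosh_exp x : cosh x = (exp x + / exp x) / 2.
Proof. unfold cosh. rewrite exp_Ropp. reflexivity. Qed.

Lemma sinh_pos x : 0 < x -> 0 < sinh x.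
Proof. intros Hx. rewrite <- sinh_0. apply sinh_lt, Hx. Qed.

Lemma sinh_nonneg x : 0 <= x -> 0 <= sinh x.
Proof. intros [Hx| <-]; [apply Rlt_le, sinh_pos, Hx| rewrite sinh_0; lra]. Qed.

Lemma cosh_sqr_sub_sinh_sqr x : cosh x ^ 2 - sinh x ^ 2 = 1.
Proof. rewrite cosh_exp, sinh_exp. pose proof (exp_pos x). field. lra. Qed.

Lemma cosh_ge_1 x : 1 <= cosh x.
Proof.
  pose proof (cosh_sqr_sub_sinh_sqr x).
  assert (0 < cosh x) by (unfold cosh; pose proof (exp_pos x); pose proof (exp_pos (- x)); lra).
  nra.
Qed.

Lemma cosh_gt_1 x : 0 < x -> 1 < cosh x.
Proof.
  intros Hx. pose proof (cosh_sqr_sub_sinh_sqr x). pose proof (sinh_pos x Hx).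
  pose proof (cosh_ge_1 x). nra.
Qed.

Lemma is_derive_sinh x : is_derive sinh x (cosh x).
Proof. apply is_derive_Reals, derivable_pt_lim_sinh. Qed.

Lemma is_derive_cosh x : is_derive cosh x (sinh x).
Proof. apply is_derive_Reals, derivable_pt_lim_cosh. Qed.

Lemma sinh_le_mul_cosh x : 0 <= x -> sinh x <= x * cosh x.
Proof.
  intros Hx.
  apply (le_of_derive_le sinh (fun y => y * cosh y) cosh (fun y => 1 * cosh y + y * sinh y) 0 x Hx).
  - intros y _. apply is_derive_sinh.
  - intros y _. apply (is_derive_Rmult (fun y => y)); [auto_derive; auto| apply is_derive_cosh].
  - intros y Hy. pose proof (sinh_nonneg y ltac:(lra)). nra.
  - rewrite sinh_0. lra.
Qed.

(* For [u = cosh y ^ (1/3)] and [s = sinh y] this is the derivative of [sinh y / u];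
   it exceeds [1] by [(u^2 - 1)^2 (2 u^2 + 1) / (3 u^4)]. *)
Lemma lazarevic_derivative_ge_1 u s : 0 < u -> s * s = u ^ 6 - 1 ->
  1 <= u ^ 3 * / u + s * (s * (- (1 / 3) * / u ^ 4)).
Proof.
  intros Hu Hs.
  assert (E : u ^ 3 * / u + s * (s * (- (1 / 3) * / u ^ 4)) - 1
              = (u ^ 2 - 1) ^ 2 * (2 * u ^ 2 + 1) / (3 * u ^ 4)).
  { replace (s * (s * (- (1 / 3) * / u ^ 4))) with (- (s * s) / (3 * u ^ 4)) by (field; lra).
    rewrite Hs. field. lra. }
  assert (0 <= (u ^ 2 - 1) ^ 2 * (2 * u ^ 2 + 1) / (3 * u ^ 4)).
  { apply Rdiv_le_0_compat; [|apply Rmult_lt_0_compat; [lra| apply pow_lt, Hu]].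
    apply Rmult_le_pos; [apply pow2_ge_0| nra]. }
  lra.
Qed.

Lemma lazarevic x : 0 <= x -> x ^ 3 * cosh x <= sinh x ^ 3.
Proof.
  intros Hx.
  set (c := fun y => Rpower (cosh y) (1 / 3)).
  assert (Hcosh0 : forall y, 0 < cosh y) by (intros y; pose proof (cosh_ge_1 y); lra).
  assert (Hc0 : forall y, 0 < c y) by (intros y; apply Rpower_pos).
  assert (Hc3 : forall y, c y ^ 3 = cosh y).
  { intros y. unfold c. rewrite <- Rpower_mult_nat.
    replace (INR 3 * (1 / 3)) with 1 by (simpl; field). apply Rpower_1, Hcosh0. }
  assert (Hcinv : forall y, Rpower (cosh y) (- (1 / 3)) = / c y)
    by (intros y; apply Rpower_Ropp).
  assert (Hcinv4 : forall y, Rpower (cosh y) (- (1 / 3) - 1) = / c y ^ 4).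
  { intros y. replace (- (1 / 3) - 1) with (- (INR 4 * (1 / 3))) by (simpl; field).
    rewrite Rpower_Ropp, Rpower_mult_nat. reflexivity. }
  enough (Hmain : x <= sinh x * / c x).
  { assert (Hxc : x * c x <= sinh x).
    { apply Rmult_le_compat_r with (r := c x) in Hmain; [|apply Rlt_le, Hc0].
      rewrite Rmult_assoc, Rinv_l in Hmain by (apply Rgt_not_eq, Hc0). lra. }
    rewrite <- Hc3, <- Rpow_mult_distr. apply pow_incr.
    pose proof (Hc0 x). split; [nra| exact Hxc]. }
  rewrite <- Hcinv.
  apply (le_of_derive_le (fun y => y) (fun y => sinh y * Rpower (cosh y) (- (1 / 3)))
           (fun _ => 1)
           (fun y => cosh y * Rpower (cosh y) (- (1 / 3))
                     + sinh y * (sinh y * (- (1 / 3) * Rpower (cosh y) (- (1 / 3) - 1)))) 0 x Hx).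
  - intros y _. auto_derive; auto.
  - intros y _.
    apply (is_derive_Rmult sinh (fun y => Rpower (cosh y) (- (1 / 3)))); [apply is_derive_sinh|].
    apply (is_derive_Rpower_comp cosh (- (1 / 3)) y); [apply Hcosh0| apply is_derive_cosh].
  - intros y _. rewrite Hcinv, Hcinv4, <- Hc3.
    apply lazarevic_derivative_ge_1; [apply Hc0|].
    rewrite <- (cosh_sqr_sub_sinh_sqr y), <- Hc3. ring.
  - rewrite sinh_0. lra.
Qed.

Lemma exp_mul_le_1 x P : 0 <= P -> P <= exp (- x) -> exp x * P <= 1.
Proof.
  intros HP HPe. rewrite <- (exp_mul_exp_opp x).
  apply Rmult_le_compat_l; [apply Rlt_le, exp_pos| exact HPe].
Qed.

Lemma tanh_le_of_exp_opp_ge x P : 0 < P -> P <= exp (- x) ->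
  tanh x <= (1 - P ^ 2) / (1 + P ^ 2).
Proof.
  intros HP HPe. pose proof (exp_mul_le_1 x P ltac:(lra) HPe).
  unfold tanh. rewrite sinh_exp, cosh_exp. set (E := exp x) in *.
  assert (HE : 0 < E) by apply exp_pos.
  replace ((E - / E) / 2 / ((E + / E) / 2)) with ((E ^ 2 - 1) / (E ^ 2 + 1)) by (field; nra).
  assert (0 <= E * P) by nra.
  apply Rdiv_le_cross; nra.
Qed.

Lemma sinh_le_of_exp_opp_ge x P : 0 < P -> P <= exp (- x) ->
  sinh x <= (1 - P ^ 2) / (2 * P).
Proof.
  intros HP HPe. pose proof (exp_mul_le_1 x P ltac:(lra) HPe).
  rewrite sinh_exp. set (E := exp x) in *.
  assert (HE : 0 < E) by apply exp_pos.
  replace ((E - / E) / 2) with ((E ^ 2 - 1) / (2 * E)) by (field; lra).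
  apply Rdiv_le_cross; nra.
Qed.

Lemma sinh_ge_of_exp_ge x L : 0 < L -> L <= exp x -> (L ^ 2 - 1) / (2 * L) <= sinh x.
Proof.
  intros HL HLe. rewrite sinh_exp. set (E := exp x) in *.
  replace ((E - / E) / 2) with ((E ^ 2 - 1) / (2 * E)) by (field; lra).
  assert (0 <= (E - L) * (E * L + 1)) by (apply Rmult_le_pos; nra).
  apply Rdiv_le_cross; nra.
Qed.

Lemma coth_le_of_exp_ge x L : 1 < L -> L <= exp x ->
  cosh x / sinh x <= (L ^ 2 + 1) / (L ^ 2 - 1).
Proof.
  intros HL HLe. rewrite sinh_exp, cosh_exp. set (E := exp x) in *.
  replace ((E + / E) / 2 / ((E - / E) / 2)) with ((E ^ 2 + 1) / (E ^ 2 - 1)) by (field; nra).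
  apply Rdiv_le_cross; nra.
Qed.

Lemma lt_sinh x : 0 < x -> x < sinh x.
Proof.
  intros Hx. pose proof (lazarevic x ltac:(lra)). pose proof (cosh_gt_1 x Hx).
  assert (0 < x ^ 3) by (apply pow_lt, Hx).
  destruct (Rlt_or_le x (sinh x)) as [|Hle]; [assumption|].
  pose proof (pow_incr (sinh x) x 3 (conj (sinh_nonneg x ltac:(lra)) Hle)). nra.
Qed.

Lemma tanh_div_pos x : 0 < x -> 0 < tanh x / x.
Proof.
  intros Hx. pose proof (sinh_pos x Hx). pose proof (cosh_ge_1 x).
  unfold tanh. apply Rdiv_lt_0_compat; [apply Rdiv_lt_0_compat|]; lra.
Qed.

Definition tanh_sinh_ineq (p x : R) : Prop :=
  Rpower (tanh x / x) p < 2 / 3 * Rpower (x / sinh x) (3 * p) + 1 / 3.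

(** * Negative exponents *)

Lemma sqr_sinhc_le_tanhc x : 0 < x -> (x / sinh x) ^ 2 <= tanh x / x.
Proof.
  intros Hx. pose proof (lazarevic x ltac:(lra)). pose proof (sinh_pos x Hx).
  pose proof (cosh_ge_1 x).
  unfold tanh. replace ((x / sinh x) ^ 2) with (x ^ 2 / sinh x ^ 2) by (field; lra).
  replace (sinh x / cosh x / x) with (sinh x / (x * cosh x)) by (field; lra).
  apply Rdiv_le_cross; [apply pow_lt; lra| nra| nra].
Qed.

Lemma tanh_sinh_ineq_neg p x : p < 0 -> 0 < x -> tanh_sinh_ineq p x.
Proof.
  intros Hp Hx. pose proof (sinh_pos x Hx). pose proof (lt_sinh x Hx).
  set (c := x / sinh x).
  assert (Hc : 0 < c < 1).
  { unfold c; split; [apply Rdiv_lt_0_compat; lra|].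
    apply Rmult_lt_reg_r with (sinh x); [lra|]. field_simplify; lra. }
  set (A := Rpower c p).
  assert (HA : 1 < A) by (apply Rpower_gt_1; assumption).
  assert (Hsqr : Rpower (tanh x / x) p <= A ^ 2).
  { unfold A. rewrite <- Rpower_mult_nat, <- Rpower_pow_l by lra.
    apply Rpower_le_base_nonpos; [lra|]. split; [apply pow_lt; lra|].
    apply sqr_sinhc_le_tanhc, Hx. }
  unfold tanh_sinh_ineq. replace (3 * p) with (INR 3 * p) by (simpl; ring).
  rewrite Rpower_mult_nat. fold c A.
  assert (0 < (A - 1) ^ 2 * (2 * A + 1)) by (apply Rmult_lt_0_compat; [apply pow_lt| ]; lra).
  nra.
Qed.

(** * Exponents at least 12/5 *)

Lemma tanh_sinh_ineq_lift p x : 12 / 5 <= p -> 0 < x ->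
  tanh_sinh_ineq (12 / 5) x -> tanh_sinh_ineq p x.
Proof.
  unfold tanh_sinh_ineq. intros Hp Hx H.
  set (r := p / (12 / 5)).
  assert (Hr : 1 <= r)
    by (unfold r; apply Rmult_le_reg_r with (12 / 5); [lra|]; field_simplify; lra).
  assert (E1 : Rpower (tanh x / x) p = Rpower (Rpower (tanh x / x) (12 / 5)) r)
    by (rewrite Rpower_mult; f_equal; unfold r; field).
  assert (E2 : Rpower (x / sinh x) (3 * p) = Rpower (Rpower (x / sinh x) (3 * (12 / 5))) r)
    by (rewrite Rpower_mult; f_equal; unfold r; field).
  rewrite E1, E2. replace (1 / 3) with (1 - 2 / 3) in * by field.
  apply Rpower_lt_convex_comb1; try apply Rpower_pos; lra.
Qed.

Lemma tanh_sinh_ineq_12_5_large x : 8 / 5 < x -> tanh_sinh_ineq (12 / 5) x.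
Proof.
  unfold tanh_sinh_ineq. intros Hx. pose proof (sinh_pos x ltac:(lra)). pose proof (cosh_ge_1 x).
  assert (Htanh : 0 < tanh x < 1).
  { unfold tanh. pose proof (cosh_sqr_sub_sinh_sqr x). split.
    - apply Rdiv_lt_0_compat; lra.
    - apply Rmult_lt_reg_r with (cosh x); [lra|]. field_simplify; nra. }
  assert (Hsmall : tanh x / x < 5 / 8).
  { apply Rmult_lt_reg_r with x; [lra|]. field_simplify; lra. }
  assert (Hpow : Rpower (5 / 8) (12 / 5) < 1 / 3).
  { assert (H5 : Rpower (5 / 8) (12 / 5) ^ 5 = (5 / 8) ^ 12).
    { rewrite <- Rpower_mult_nat, <- Rpower_pow by lra. f_equal. simpl. field. }
    destruct (Rlt_or_le (Rpower (5 / 8) (12 / 5)) (1 / 3)) as [|Hge]; [assumption|].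
    assert (Hcmp : (1 / 3) ^ 5 <= Rpower (5 / 8) (12 / 5) ^ 5) by (apply pow_incr; lra).
    rewrite H5 in Hcmp. lra. }
  pose proof (tanh_div_pos x ltac:(lra)).
  assert (Rpower (tanh x / x) (12 / 5) < Rpower (5 / 8) (12 / 5)) by (apply Rlt_Rpower_l; lra).
  pose proof (Rpower_pos (x / sinh x) (3 * (12 / 5))). lra.
Qed.

Definition taylor11_opp : list Z :=
  [39916800; -39916800; 19958400; -6652800; 1663200; -332640; 55440; -7920; 990; -110; 11; -1]%Z.

Lemma peval_taylor11_opp x : peval taylor11_opp x = 39916800 * exp_taylor 11 (- x).
Proof. unfold taylor11_opp, peval, exp_taylor, inv_fact. simpl. field. Qed.

Lemma taylor11_opp_cert : certified_pos taylor11_opp 5 [4; 8]%Z = true.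
Proof. vm_compute. reflexivity. Qed.

Lemma exp_taylor11_opp_le x : 0 <= x -> exp_taylor 11 (- x) <= exp (- x).
Proof. intros Hx. apply (proj2 (exp_opp_taylor_alternating 11 x Hx)). reflexivity. Qed.

Lemma exp_taylor11_opp_pos x : 0 < x <= 8 / 5 -> 0 < exp_taylor 11 (- x).
Proof.
  intros Hx.
  assert (H : 0 < peval taylor11_opp x)
    by (apply (certified_pos_sound _ _ _ taylor11_opp_cert); cbn [last]; lra).
  rewrite peval_taylor11_opp in H. lra.
Qed.

(* [hpoly] and [kpoly] (over their denominators, at [y = x^2]) approximate
   [(tanh x / x) ^ (1/5)] from above and [(x / sinh x) ^ (3/5)] from below, so that the
   powers [12/5] become integer powers. *)
Definition hpoly : list Z :=
  [3774873600; -251658240; 67108864; -20611800; 6750225; -1907775; 286650]%Z.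
Definition kpoly : list Z :=
  [125829120; -12582912; 1048576; -89550; 7995; -840; 90]%Z.

Definition hfun (y : R) : R := peval hpoly y / 3774873600.
Definition kfun (y : R) : R := peval kpoly y / 125829120.

Definition cert_tanhc : list Z :=
  psub (pmul (pmul (ppow (pcomp_sqr hpoly) 5)
                   (padd [39916800 * 39916800]%Z (ppow taylor11_opp 2))) pX)
       (pmul (ppow [3774873600]%Z 5) (psub [39916800 * 39916800]%Z (ppow taylor11_opp 2))).
Definition cert_sinhc : list Z :=
  psub (pscale 8 (pmul (ppow [125829120]%Z 5)
          (pmul (ppow [39916800]%Z 3) (ppow (pmul pX taylor11_opp) 3))))
       (pmul (ppow (pcomp_sqr kpoly) 5)
             (ppow (psub [39916800 * 39916800]%Z (ppow taylor11_opp 2)) 3)).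
Definition cert_hk : list Z :=
  psub (padd (pscale 2 (pmul (ppow [3774873600]%Z 12) (ppow kpoly 12)))
             (ppow [3774873600 * 125829120]%Z 12))
       (pscale 3 (pmul (ppow [125829120]%Z 12) (ppow hpoly 12))).

Lemma hpoly_cert : certified_pos hpoly 25 [64]%Z = true. Proof. vm_compute. reflexivity. Qed.
Lemma kpoly_cert : certified_pos kpoly 25 [64]%Z = true. Proof. vm_compute. reflexivity. Qed.
Lemma cert_tanhc_cert : certified_pos cert_tanhc 20 [2; 3; 4; 8; 16; 24; 32]%Z = true.
Proof. vm_compute. reflexivity. Qed.
Lemma cert_sinhc_cert : certified_pos cert_sinhc 5 [1; 2; 4; 6; 8]%Z = true.
Proof. vm_compute. reflexivity. Qed.
Lemma cert_hk_cert : certified_pos cert_hk 25 [16; 32; 48; 64]%Z = true.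
Proof. vm_compute. reflexivity. Qed.

Ltac peval_simpl :=
  repeat rewrite ?peval_sub, ?peval_add, ?peval_mul, ?peval_scale, ?peval_pow, ?peval_comp_sqr,
    ?peval_const, ?peval_X, ?peval_taylor11_opp, ?mult_IZR.

Lemma peval_cert_tanhc x : peval cert_tanhc x =
  39916800 ^ 2 * 3774873600 ^ 5 *
  (hfun (x * x) ^ 5 * (1 + exp_taylor 11 (- x) ^ 2) * x - (1 - exp_taylor 11 (- x) ^ 2)).
Proof. unfold cert_tanhc, hfun. peval_simpl. field. Qed.

Lemma peval_cert_sinhc x : peval cert_sinhc x =
  39916800 ^ 6 * 125829120 ^ 5 *
  (8 * (x * exp_taylor 11 (- x)) ^ 3 - kfun (x * x) ^ 5 * (1 - exp_taylor 11 (- x) ^ 2) ^ 3).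
Proof. unfold cert_sinhc, kfun. peval_simpl. field. Qed.

Lemma peval_cert_hk y : peval cert_hk y =
  3774873600 ^ 12 * 125829120 ^ 12 * (2 * kfun y ^ 12 + 1 - 3 * hfun y ^ 12).
Proof. unfold cert_hk, hfun, kfun. peval_simpl. field. Qed.

Lemma tanhc_le_hfun x : 0 < x <= 8 / 5 -> tanh x / x <= hfun (x * x) ^ 5.
Proof.
  intros Hx. pose proof (exp_taylor11_opp_pos x Hx) as HP.
  pose proof (tanh_le_of_exp_opp_ge x _ HP (exp_taylor11_opp_le x ltac:(lra))) as Htanh.
  assert (Hcert : 0 < peval cert_tanhc x)
    by (apply (certified_pos_sound _ _ _ cert_tanhc_cert); cbn [last]; lra).
  rewrite peval_cert_tanhc in Hcert. set (P := exp_taylor 11 (- x)) in *.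
  apply Rle_trans with ((1 - P ^ 2) / ((1 + P ^ 2) * x)).
  - replace ((1 - P ^ 2) / ((1 + P ^ 2) * x)) with ((1 - P ^ 2) / (1 + P ^ 2) / x) by (field; nra).
    apply Rmult_le_compat_r; [apply Rlt_le, Rinv_0_lt_compat; lra| exact Htanh].
  - rewrite <- (Rdiv_1_r (hfun (x * x) ^ 5)). apply Rdiv_le_cross; nra.
Qed.

Lemma kfun_le_sinhc x : 0 < x <= 8 / 5 -> kfun (x * x) ^ 5 <= (x / sinh x) ^ 3.
Proof.
  intros Hx. pose proof (exp_taylor11_opp_pos x Hx) as HP.
  pose proof (exp_taylor11_opp_le x ltac:(lra)) as HPe.
  pose proof (sinh_le_of_exp_opp_ge x _ HP HPe) as Hsinh.
  pose proof (sinh_pos x ltac:(lra)).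
  assert (Hcert : 0 < peval cert_sinhc x)
    by (apply (certified_pos_sound _ _ _ cert_sinhc_cert); cbn [last]; lra).
  rewrite peval_cert_sinhc in Hcert. set (P := exp_taylor 11 (- x)) in *.
  assert (HP1 : P < 1).
  { assert (exp (- x) < 1) by (rewrite <- exp_0; apply exp_increasing; lra). lra. }
  assert (Hlow : 2 * x * P / (1 - P ^ 2) <= x / sinh x).
  { apply Rdiv_le_cross; [nra| lra|].
    assert (sinh x * (2 * P) <= 1 - P ^ 2).
    { apply Rmult_le_compat_r with (r := 2 * P) in Hsinh; [|lra].
      replace ((1 - P ^ 2) / (2 * P) * (2 * P)) with (1 - P ^ 2) in Hsinh by (field; lra).
      exact Hsinh. }
    nra. }
  apply Rle_trans with ((2 * x * P / (1 - P ^ 2)) ^ 3).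
  - replace ((2 * x * P / (1 - P ^ 2)) ^ 3) with (8 * (x * P) ^ 3 / (1 - P ^ 2) ^ 3)
      by (field; nra).
    rewrite <- (Rdiv_1_r (kfun (x * x) ^ 5)). apply Rdiv_le_cross; [lra| apply pow_lt; nra| nra].
  - apply pow_incr. split; [|exact Hlow]. apply Rdiv_le_0_compat; nra.
Qed.

Lemma hfun_kfun_ineq y : 0 < y <= 64 / 25 -> 3 * hfun y ^ 12 < 2 * kfun y ^ 12 + 1.
Proof.
  intros Hy.
  assert (Hcert : 0 < peval cert_hk y)
    by (apply (certified_pos_sound _ _ _ cert_hk_cert); cbn [last]; lra).
  rewrite peval_cert_hk in Hcert.
  assert (0 < 3774873600 ^ 12 * 125829120 ^ 12) by (apply Rmult_lt_0_compat; apply pow_lt; lra).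
  nra.
Qed.

Lemma Rpower_pow5_12_5 c : 0 < c -> Rpower (c ^ 5) (12 / 5) = c ^ 12.
Proof.
  intros Hc. rewrite Rpower_pow_l by exact Hc.
  replace (INR 5 * (12 / 5)) with (INR 12) by (simpl; field). apply Rpower_pow, Hc.
Qed.

Lemma tanh_sinh_ineq_12_5_small x : 0 < x <= 8 / 5 -> tanh_sinh_ineq (12 / 5) x.
Proof.
  unfold tanh_sinh_ineq. intros Hx. pose proof (sinh_pos x ltac:(lra)). pose proof (cosh_ge_1 x).
  assert (Hy : 0 < x * x <= 64 / 25) by nra.
  assert (Hh : 0 < hfun (x * x)).
  { unfold hfun. apply Rdiv_lt_0_compat; [|lra].
    apply (certified_pos_sound _ _ _ hpoly_cert); cbn [last]; lra. }
  assert (Hk : 0 < kfun (x * x)).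
  { unfold kfun. apply Rdiv_lt_0_compat; [|lra].
    apply (certified_pos_sound _ _ _ kpoly_cert); cbn [last]; lra. }
  assert (Htanh : Rpower (tanh x / x) (12 / 5) <= hfun (x * x) ^ 12).
  { rewrite <- Rpower_pow5_12_5 by exact Hh. apply Rle_Rpower_l; [lra|]. split.
    - apply tanh_div_pos. lra.
    - apply tanhc_le_hfun, Hx. }
  assert (Hsinh : kfun (x * x) ^ 12 <= Rpower (x / sinh x) (3 * (12 / 5))).
  { replace (3 * (12 / 5)) with (INR 3 * (12 / 5)) by (simpl; ring).
    rewrite <- Rpower_pow_l by (apply Rdiv_lt_0_compat; lra).
    rewrite <- (Rpower_pow5_12_5 (kfun (x * x))) by exact Hk.
    apply Rle_Rpower_l; [lra|]. split; [apply pow_lt, Hk| apply kfun_le_sinhc, Hx]. }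
  pose proof (hfun_kfun_ineq _ Hy). lra.
Qed.

Lemma tanh_sinh_ineq_12_5 x : 0 < x -> tanh_sinh_ineq (12 / 5) x.
Proof.
  intros Hx. destruct (Rle_or_lt x (8 / 5)).
  - apply tanh_sinh_ineq_12_5_small. lra.
  - apply tanh_sinh_ineq_12_5_large. lra.
Qed.

(** * Exponents in [0, 12/5) *)

(* By the binomial bounds of third and second order, [(1 + w)^(-p)] exceeds
   [2/3 (1 + z)^(-p) + 1/3] by at least [p * binomial_gap p w z]. *)
Definition binomial_gap (p w z : R) : R :=
  - w + (p + 1) / 2 * w ^ 2 - (p + 1) * (p + 2) / 6 * w ^ 3 + 2 / 3 * z - (p + 1) / 3 * z ^ 2.

Lemma binomial_gap_le p w W z Zl Zu : 0 <= p -> 0 <= w <= W -> (p + 1) * W <= 1 ->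
  Zl <= z <= Zu -> (p + 1) * Zu <= 1 -> binomial_gap p W Zl <= binomial_gap p w z.
Proof.
  intros Hp Hw HW Hz HZ.
  assert (Ew : binomial_gap p w z - binomial_gap p W z
               = (W - w) * (1 - (p + 1) / 2 * (w + W)
                            + (p + 1) * (p + 2) / 6 * (w ^ 2 + w * W + W ^ 2)))
    by (unfold binomial_gap; ring).
  assert (Ez : binomial_gap p W z - binomial_gap p W Zl
               = (z - Zl) * (2 / 3 - (p + 1) / 3 * (z + Zl)))
    by (unfold binomial_gap; ring).
  assert (0 <= (p + 1) * (p + 2) / 6 * (w ^ 2 + w * W + W ^ 2)).
  { apply Rmult_le_pos; [|nra]. apply Rmult_le_pos; [nra| lra]. }
  assert (0 <= (W - w) * (1 - (p + 1) / 2 * (w + W)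
                          + (p + 1) * (p + 2) / 6 * (w ^ 2 + w * W + W ^ 2)))
    by (apply Rmult_le_pos; nra).
  assert (0 <= (z - Zl) * (2 / 3 - (p + 1) / 3 * (z + Zl))) by (apply Rmult_le_pos; nra).
  lra.
Qed.

Lemma Rpower_1plus_gap p w z : 0 <= p -> 0 <= w -> 0 <= z -> 0 <= binomial_gap p w z ->
  2 / 3 * Rpower (1 + z) (- p) + 1 / 3 <= Rpower (1 + w) (- p).
Proof.
  intros Hp Hw Hz Hgap.
  pose proof (Rpower_1plus_opp_ge_taylor3 p w Hp Hw).
  pose proof (Rpower_1plus_opp_le_taylor2 p z Hp Hz).
  assert (0 <= p * binomial_gap p w z) by (apply Rmult_le_pos; assumption).
  unfold binomial_gap in *. nra.
Qed.

Definition taylor7 : list Z := [5040; 5040; 2520; 840; 210; 42; 7; 1]%Z.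

Lemma peval_taylor7 x : peval taylor7 x = 5040 * exp_taylor 7 x.
Proof. unfold taylor7, peval, exp_taylor, inv_fact. simpl. field. Qed.

(* Bounds on [w] and [z] from [exp_taylor 7 x <= exp x] and
   [exp_taylor 11 (- x) <= exp (- x)]. *)
Definition w_upper (x : R) : R :=
  let L := exp_taylor 7 x in x * (L ^ 2 + 1) / (L ^ 2 - 1) - 1.
Definition z_lower (x : R) : R :=
  let L := exp_taylor 7 x in ((L ^ 2 - 1) / (2 * x * L)) ^ 3 - 1.
Definition z_upper (x : R) : R :=
  let P := exp_taylor 11 (- x) in ((1 - P ^ 2) / (2 * x * P)) ^ 3 - 1.

Lemma w_bounds x : 0 < x -> 0 <= x * cosh x / sinh x - 1 <= w_upper x.
Proof.
  intros Hx. pose proof (sinh_pos x Hx). pose proof (sinh_le_mul_cosh x ltac:(lra)).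
  pose proof (exp_taylor_gt_1 6 x Hx) as HL.
  pose proof (coth_le_of_exp_ge x _ HL (exp_taylor_le_exp 7 x ltac:(lra))) as Hcoth.
  unfold w_upper. set (L := exp_taylor 7 x) in *. split.
  - enough (1 <= x * cosh x / sinh x) by lra.
    apply (Rmult_le_reg_r (sinh x)); [lra|].
    unfold Rdiv. rewrite Rmult_assoc, Rinv_l by lra. lra.
  - replace (x * cosh x / sinh x) with (x * (cosh x / sinh x)) by (field; lra).
    replace (x * (L ^ 2 + 1) / (L ^ 2 - 1)) with (x * ((L ^ 2 + 1) / (L ^ 2 - 1))) by (field; nra).
    apply Rplus_le_compat_r, Rmult_le_compat_l; lra.
Qed.

Lemma z_bounds x : 0 < x <= 8 / 5 -> z_lower x <= (sinh x / x) ^ 3 - 1 <= z_upper x.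
Proof.
  intros Hx. pose proof (sinh_pos x ltac:(lra)).
  pose proof (exp_taylor_gt_1 6 x ltac:(lra)) as HL.
  pose proof (sinh_ge_of_exp_ge x (exp_taylor 7 x) ltac:(lra)
                (exp_taylor_le_exp 7 x ltac:(lra))) as Hlow.
  pose proof (exp_taylor11_opp_pos x Hx) as HP.
  pose proof (sinh_le_of_exp_opp_ge x _ HP (exp_taylor11_opp_le x ltac:(lra))) as Hup.
  unfold z_lower, z_upper.
  set (L := exp_taylor 7 x) in *. set (P := exp_taylor 11 (- x)) in *.
  assert (Hdiv : forall a b, 0 < b -> a / (2 * x * b) = a / (2 * b) / x)
    by (intros a b Hb; field; lra).
  split; apply Rplus_le_compat_r, pow_incr; rewrite ?Hdiv by lra; split.
  - apply Rdiv_le_0_compat; [|lra]. apply Rdiv_le_0_compat; nra.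
  - apply Rmult_le_compat_r; [apply Rlt_le, Rinv_0_lt_compat; lra| exact Hlow].
  - apply Rdiv_le_0_compat; lra.
  - apply Rmult_le_compat_r; [apply Rlt_le, Rinv_0_lt_compat; lra| exact Hup].
Qed.

(* Cleared of denominators: [w_upper = w_num / w_den], [z_lower = zl_num / zl_den] and
   [1 + z_upper = (39916800^2 - taylor11_opp^2)^3 / zu_den]; at [p = 12/5 - 10 x^2],
   [q1_poly = 5 (p + 1)] and [q2_poly = 5 (p + 2)]. *)
Definition q1_poly : list Z := [17; 0; -50]%Z.
Definition q2_poly : list Z := [22; 0; -50]%Z.
Definition w_den : list Z := psub (ppow taylor7 2) [5040 * 5040]%Z.
Definition w_num : list Z := psub (pmul pX (padd (ppow taylor7 2) [5040 * 5040]%Z)) w_den.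
Definition zl_den : list Z := pscale 8 (pmul (ppow [5040]%Z 3) (ppow (pmul pX taylor7) 3)).
Definition zl_num : list Z := psub (ppow w_den 3) zl_den.
Definition zu_den : list Z :=
  pscale 8 (pmul (ppow [39916800]%Z 3) (ppow (pmul pX taylor11_opp) 3)).

Definition cert_w_upper : list Z := psub (pscale 5 w_den) (pmul q1_poly w_num).
Definition cert_z_upper : list Z :=
  psub (pscale 5 zu_den)
       (pmul q1_poly (psub (ppow (psub [39916800 * 39916800]%Z (ppow taylor11_opp 2)) 3) zu_den)).
Definition cert_gap : list Z :=
  psub (padd (psub (padd
    (pscale (-150) (pmul w_num (pmul (ppow w_den 2) (ppow zl_den 2))))
    (pscale 15 (pmul q1_poly (pmul (ppow w_num 2) (pmul w_den (ppow zl_den 2))))))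
    (pmul (pmul q1_poly q2_poly) (pmul (ppow w_num 3) (ppow zl_den 2))))
    (pscale 100 (pmul zl_num (pmul zl_den (ppow w_den 3)))))
    (pscale 10 (pmul q1_poly (pmul (ppow zl_num 2) (ppow w_den 3)))).

Lemma cert_w_upper_cert : certified_pos cert_w_upper 2 [1]%Z = true.
Proof. vm_compute. reflexivity. Qed.
Lemma cert_z_upper_cert : certified_pos cert_z_upper 4 [1; 2]%Z = true.
Proof. vm_compute. reflexivity. Qed.
Lemma cert_gap_cert : certified_pos cert_gap 2 [1]%Z = true.
Proof. vm_compute. reflexivity. Qed.

Ltac peval_zu_denimpl :=
  unfold zl_num, w_num, w_den, zl_den, zu_den, q1_poly, q2_poly; peval_simpl;
  rewrite ?peval_taylor7; cbn [peval fold_right].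

Lemma peval_cert_w_upper x : peval cert_w_upper x =
  5040 ^ 2 * (5 * (exp_taylor 7 x ^ 2 - 1)
              - (17 - 50 * x ^ 2) * (x * (exp_taylor 7 x ^ 2 + 1) - (exp_taylor 7 x ^ 2 - 1))).
Proof. unfold cert_w_upper. peval_zu_denimpl. ring. Qed.

Lemma peval_cert_z_upper x : peval cert_z_upper x =
  39916800 ^ 6 * (40 * (x * exp_taylor 11 (- x)) ^ 3
    - (17 - 50 * x ^ 2) * ((1 - exp_taylor 11 (- x) ^ 2) ^ 3 - 8 * (x * exp_taylor 11 (- x)) ^ 3)).
Proof. unfold cert_z_upper. peval_zu_denimpl. ring. Qed.

Lemma peval_cert_gap x : 0 < x -> 1 < exp_taylor 7 x -> peval cert_gap x =
  150 * (5040 ^ 2 * (exp_taylor 7 x ^ 2 - 1)) ^ 3 * (8 * 5040 ^ 6 * (x * exp_taylor 7 x) ^ 3) ^ 2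
  * binomial_gap (12 / 5 - 10 * x ^ 2) (w_upper x) (z_lower x).
Proof.
  intros Hx HL. unfold cert_gap, binomial_gap, w_upper, z_lower. peval_zu_denimpl.
  field. nra.
Qed.

Lemma w_upper_small x : 0 < x <= 1 / 2 -> (12 / 5 - 10 * x ^ 2 + 1) * w_upper x <= 1.
Proof.
  intros Hx.
  assert (Hcert : 0 < peval cert_w_upper x)
    by (apply (certified_pos_sound _ _ _ cert_w_upper_cert); cbn [last]; lra).
  rewrite peval_cert_w_upper in Hcert.
  pose proof (exp_taylor_gt_1 6 x ltac:(lra)) as HL.
  unfold w_upper. set (L := exp_taylor 7 x) in *.
  replace ((12 / 5 - 10 * x ^ 2 + 1) * (x * (L ^ 2 + 1) / (L ^ 2 - 1) - 1))
    with ((17 - 50 * x ^ 2) * (x * (L ^ 2 + 1) - (L ^ 2 - 1)) / (5 * (L ^ 2 - 1)))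
    by (field; nra).
  rewrite <- (Rdiv_1_r 1). apply Rdiv_le_cross; nra.
Qed.

Lemma z_upper_small x : 0 < x <= 1 / 2 -> (12 / 5 - 10 * x ^ 2 + 1) * z_upper x <= 1.
Proof.
  intros Hx.
  assert (Hcert : 0 < peval cert_z_upper x)
    by (apply (certified_pos_sound _ _ _ cert_z_upper_cert); cbn [last]; lra).
  rewrite peval_cert_z_upper in Hcert.
  pose proof (exp_taylor11_opp_pos x ltac:(lra)) as HP.
  unfold z_upper. set (P := exp_taylor 11 (- x)) in *.
  assert (HxP : 0 < (x * P) ^ 3) by (apply pow_lt; nra).
  replace ((12 / 5 - 10 * x ^ 2 + 1) * (((1 - P ^ 2) / (2 * x * P)) ^ 3 - 1))
    with ((17 - 50 * x ^ 2) * ((1 - P ^ 2) ^ 3 - 8 * (x * P) ^ 3) / (40 * (x * P) ^ 3))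
    by (field; nra).
  rewrite <- (Rdiv_1_r 1). apply Rdiv_le_cross; nra.
Qed.

Lemma binomial_gap_at_bounds_pos x : 0 < x <= 1 / 2 ->
  0 < binomial_gap (12 / 5 - 10 * x ^ 2) (w_upper x) (z_lower x).
Proof.
  intros Hx. pose proof (exp_taylor_gt_1 6 x ltac:(lra)) as HL.
  assert (Hcert : 0 < peval cert_gap x)
    by (apply (certified_pos_sound _ _ _ cert_gap_cert); cbn [last]; lra).
  rewrite peval_cert_gap in Hcert by lra.
  set (L := exp_taylor 7 x) in *.
  assert (0 < 150 * (5040 ^ 2 * (L ^ 2 - 1)) ^ 3 * (8 * 5040 ^ 6 * (x * L) ^ 3) ^ 2).
  { apply Rmult_lt_0_compat; [apply Rmult_lt_0_compat|]; [lra| |]; apply pow_lt; [nra|].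
    apply Rmult_lt_0_compat; [lra| apply pow_lt; nra]. }
  nra.
Qed.

Lemma tanh_sinh_ineq_fails x : 0 < x -> 10 * x ^ 2 <= 12 / 5 ->
  ~ tanh_sinh_ineq (12 / 5 - 10 * x ^ 2) x.
Proof.
  intros Hx Hp. unfold tanh_sinh_ineq. apply Rle_not_lt. set (p := 12 / 5 - 10 * x ^ 2).
  assert (Hx2 : x <= 1 / 2) by nra.
  pose proof (sinh_pos x Hx). pose proof (cosh_ge_1 x).
  set (w := x * cosh x / sinh x - 1). set (z := (sinh x / x) ^ 3 - 1).
  destruct (w_bounds x Hx) as [Hw0 Hw]. destruct (z_bounds x ltac:(lra)) as [Hzl Hzu].
  fold w in Hw0, Hw. fold z in Hzl, Hzu.
  assert (Hz0 : 0 <= z).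
  { unfold z. pose proof (lazarevic x ltac:(lra)). pose proof (pow_lt x 3 Hx).
    replace ((sinh x / x) ^ 3) with (sinh x ^ 3 / x ^ 3) by (field; lra).
    enough (1 <= sinh x ^ 3 / x ^ 3) by lra.
    rewrite <- (Rdiv_1_r 1). apply Rdiv_le_cross; nra. }
  assert (Htanh : tanh x / x = / (1 + w)) by (unfold w, tanh; field; nra).
  assert (Hsinh : (x / sinh x) ^ 3 = / (1 + z)).
  { assert (0 < sinh x ^ 3) by (apply pow_lt; lra). unfold z. field. split; lra. }
  replace (3 * p) with (INR 3 * p) by (simpl; ring).
  rewrite <- Rpower_pow_l, Hsinh, Htanh, !Rpower_inv_l, <- !Rpower_Ropp
    by (try apply Rdiv_lt_0_compat; lra).
  apply Rpower_1plus_gap; [unfold p; lra| lra| lra|].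
  apply Rle_trans with (binomial_gap p (w_upper x) (z_lower x)).
  - apply Rlt_le, binomial_gap_at_bounds_pos. lra.
  - apply binomial_gap_le with (z_upper x); unfold p; try lra.
    + apply w_upper_small. lra.
    + apply z_upper_small. lra.
Qed.

Lemma tanh_sinh_ineq_fails_below p : 0 <= p < 12 / 5 -> exists x, 0 < x /\ ~ tanh_sinh_ineq p x.
Proof.
  intros Hp. set (x := sqrt ((12 - 5 * p) / 50)).
  assert (Hx : 0 < x) by (apply sqrt_lt_R0; lra).
  assert (Hx2 : x ^ 2 = (12 - 5 * p) / 50) by (apply pow2_sqrt; lra).
  exists x. split; [exact Hx|].
  replace p with (12 / 5 - 10 * x ^ 2) by (rewrite Hx2; field).
  apply tanh_sinh_ineq_fails; [exact Hx| rewrite Hx2; lra].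
Qed.

Theorem proposition4p13 (p : R) (hp : p <> 0) :
  (forall x : R, 0 < x ->
     Rpower (tanh x / x) p < 2 / 3 * Rpower (x / sinh x) (3 * p) + 1 / 3)
  <-> (p < 0 \/ 12 / 5 <= p).
Proof.
  change ((forall x, 0 < x -> tanh_sinh_ineq p x) <-> (p < 0 \/ 12 / 5 <= p)). split.
  - intros Hall. destruct (Rlt_or_le p 0) as [Hneg| Hnonneg]; [now left|].
    destruct (Rle_or_lt (12 / 5) p) as [Hge| Hlt]; [now right|].
    destruct (tanh_sinh_ineq_fails_below p (conj Hnonneg Hlt)) as [x [Hx Hfail]].
    exfalso. exact (Hfail (Hall x Hx)).
  - intros [Hneg| Hge] x Hx.
    + exact (tanh_sinh_ineq_neg p x Hneg Hx).
    + exact (tanh_sinh_ineq_lift p x Hge Hx (tanh_sinh_ineq_12_5 x Hx)).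
Qed.
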